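(* Let $|\nu|\le1$, $T>0$, $\gamma\in[0,1/4)$, and let $q:\mathbb{R}\to[0,\infty)$ satisfy $q(k)\le C_q\min\{1,k^{-2}\}$ for all $k$. Then there is $C>0$ such that for all $\varepsilon\in(0,1]$ \[ \sup_{S\in[0,T]}\int_{\mathbb{R}}q(k)|f(S,k)|^2(|k|^{2\gamma}+1)\,dk\le C(\varepsilon^2+\varepsilon^{1/2}). \]
   Context: $f(\tau,k)=e^{\tau\nu}\big[\chi_{(-1/\varepsilon,\infty)}(k)e^{-\tau(2+k\varepsilon)^2k^2}-e^{-4\tau k^2}\big]$ for $\tau\in[0,T]$, $k\in\mathbb{R}$. *)

From Stdlib Require Import Reals Lra.
Open Scope R_scope.

(* |x|^y with the convention 0^0 = 1 and 0^y = 0 for y > 0 (Rpower needs x > 0). *)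
Definition rpow (x y : R) : R :=
  if Req_EM_T x 0 then (if Req_EM_T y 0 then 1 else 0) else Rpower x y.

Definition chi_gt (a k : R) : R := if Rlt_dec a k then 1 else 0.

Definition f_fn (nu eps tau k : R) : R :=
  exp (tau * nu) *
  (chi_gt (- / eps) k * exp (- tau * (2 + k * eps) ^ 2 * k ^ 2)
   - exp (- 4 * tau * k ^ 2)).

(* "int_R g <= M" for a nonnegative function g, in the sense of the upper
   (Darboux) integral: on every compact interval [a,b], g is dominated by
   step functions whose integral is at most M + delta for every delta > 0.
   This upper bound implies the corresponding bound on the Lebesgue integral
   whenever g is measurable. *)
Definition integral_R_le (g : R -> R) (M : R) : Prop :=
  forall a b : R, a <= b -> forall delta : R, 0 < delta ->
    exists phi : StepFun a b,
      (forall x, a <= x <= b -> g x <= phi x) /\ RiemannInt_SF phi <= M + delta.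

(* Write f = e^{S nu} D with D the bracket. Where eps |k| < 1 the indicator is 1 and the
   two Gaussians differ by at most 5 eps |k| (mean value theorem, the factor S k^2 being
   absorbed by e^{-S k^2}), so with q k^2 <= Cq and |k|^{2 gamma} <= 1 + |k|^{1/2} the
   integrand is O(eps^{3/2}); where eps |k| >= 1 one only has |D| <= 1, but q <= Cq / k^2
   makes the integrand O(k^-2 + |k|^{-3/2}). Both regimes are dominated by the single
   profile  6 eps^{3/2} / (1 + (eps k)^2) + |rho_eps(k)|,  rho_eps(k) =
   4 eps^{5/2} k (1 + (eps k)^2)^{-5/4}, whose integral over any interval is O(eps^{1/2})
   by the explicit primitives atan (eps k) and -8 eps^{1/2} (1 + (eps k)^2)^{-1/4}. *)

From Stdlib Require Import Reals Lra Lia.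
From Coquelicot Require Import Coquelicot.
Open Scope R_scope.

Lemma exp_le_compat (x y : R) : x <= y -> exp x <= exp y.
Proof. intros [h|h]; [left; now apply exp_increasing | right; now rewrite h]. Qed.

Lemma mul_exp_opp_le_1 (x : R) : x * exp (- x) <= 1.
Proof.
pose proof (exp_ineq1_le x). pose proof (exp_pos (- x)).
assert (exp x * exp (- x) = 1) by (rewrite <- exp_plus, Rplus_opp_r; apply exp_0).
nra.
Qed.

Lemma Rabs_exp_opp_sub (a b : R) : 0 <= a -> 0 <= b ->
  Rabs (exp (- a) - exp (- b)) <= exp (- Rmin a b) * Rabs (a - b).
Proof.
intros ha hb.
assert (key : forall x y, x <= y -> Rabs (exp (- x) - exp (- y)) <= exp (- x) * (y - x)).
{ intros x y hxy.
  replace (exp (- y)) with (exp (- x) * exp (- (y - x))) by (rewrite <- exp_plus; f_equal; ring).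
  pose proof (exp_ineq1_le (- (y - x))).
  assert (exp (- (y - x)) <= 1) by (rewrite <- exp_0; apply exp_le_compat; lra).
  pose proof (exp_pos (- x)).
  rewrite Rabs_pos_eq; nra. }
destruct (Rle_or_lt a b) as [h|h].
- rewrite Rmin_left, (Rabs_minus_sym a b), (Rabs_pos_eq (b - a)) by lra. now apply key.
- rewrite Rmin_right, (Rabs_pos_eq (a - b)), Rabs_minus_sym by lra. apply key; lra.
Qed.

Lemma rpow_ge_0 (x y : R) : 0 <= rpow x y.
Proof.
unfold rpow, Rpower.
destruct (Req_EM_T x 0); [destruct (Req_EM_T y 0); lra | left; apply exp_pos].
Qed.

Lemma rpow_le_1_add_sqrt (x y : R) : 0 <= x -> 0 <= y <= / 2 -> rpow x y <= 1 + sqrt x.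
Proof.
intros hx hy. pose proof (sqrt_pos x).
unfold rpow. destruct (Req_EM_T x 0) as [_|hx0].
{ destruct (Req_EM_T y 0); lra. }
destruct (Rle_or_lt x 1) as [hx1|hx1].
- assert (ln x <= 0) by (rewrite <- ln_1; apply ln_le; lra).
  assert (Rpower x y <= 1) by (unfold Rpower; rewrite <- exp_0; apply exp_le_compat; nra).
  lra.
- rewrite <- Rpower_sqrt by lra.
  assert (Rpower x y <= Rpower x (/ 2)) by (apply Rle_Rpower; lra). lra.
Qed.

Definition bracket (eps S k : R) : R :=
  chi_gt (- / eps) k * exp (- S * (2 + k * eps) ^ 2 * k ^ 2) - exp (- 4 * S * k ^ 2).

Lemma f_fn_sq_le (nu eps S T k : R) : Rabs nu <= 1 -> 0 <= S <= T ->
  f_fn nu eps S k ^ 2 <= exp (2 * T) * bracket eps S k ^ 2.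
Proof.
intros hnu hS.
change (f_fn nu eps S k) with (exp (S * nu) * bracket eps S k).
assert (exp (S * nu) <= exp T).
{ apply exp_le_compat. pose proof (Rle_abs nu). pose proof (Rle_abs (- nu)).
  rewrite Rabs_Ropp in *. nra. }
assert (exp (2 * T) = exp T * exp T) by (rewrite <- exp_plus; f_equal; ring).
pose proof (exp_pos (S * nu)).
rewrite Rpow_mult_distr. apply Rmult_le_compat_r; [apply pow2_ge_0 | nra].
Qed.

Lemma bracket_sq_le_1 (eps S k : R) : 0 <= S -> bracket eps S k ^ 2 <= 1.
Proof.
intros hS.
assert (E1 : 0 < exp (- S * (2 + k * eps) ^ 2 * k ^ 2) <= 1).
{ split; [apply exp_pos|]. rewrite <- exp_0. apply exp_le_compat.
  assert (0 <= (2 + k * eps) ^ 2 * k ^ 2) by (apply Rmult_le_pos; apply pow2_ge_0). nra. }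
assert (E2 : 0 < exp (- 4 * S * k ^ 2) <= 1).
{ split; [apply exp_pos|]. rewrite <- exp_0. apply exp_le_compat.
  pose proof (pow2_ge_0 k). nra. }
unfold bracket, chi_gt. destruct (Rlt_dec (- / eps) k); nra.
Qed.

Lemma bracket_sq_small (eps S k : R) : 0 <= S -> 0 < eps -> eps * Rabs k < 1 ->
  bracket eps S k ^ 2 <= 25 * (eps ^ 2 * k ^ 2).
Proof.
intros hS he hk.
assert (hke : -1 < k * eps < 1).
{ pose proof (Rle_abs k). pose proof (Rle_abs (- k)). rewrite Rabs_Ropp in *. nra. }
assert (hchi : chi_gt (- / eps) k = 1).
{ unfold chi_gt. destruct (Rlt_dec (- / eps) k) as [_|hn]; [reflexivity|].
  exfalso. apply hn. apply Ropp_lt_cancel. rewrite Ropp_involutive.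
  apply Rmult_lt_reg_l with eps; [lra|]. rewrite Rinv_r by lra. lra. }
set (a := S * (2 + k * eps) ^ 2 * k ^ 2). set (b := 4 * S * k ^ 2).
assert (hbr : bracket eps S k = exp (- a) - exp (- b)).
{ unfold bracket. rewrite hchi, Rmult_1_l. unfold a, b. f_equal; f_equal; ring. }
assert (hSk : 0 <= S * k ^ 2) by (pose proof (pow2_ge_0 k); nra).
assert (ha : S * k ^ 2 <= a) by (unfold a; assert (1 <= (2 + k * eps) ^ 2) by nra; nra).
assert (hb : S * k ^ 2 <= b) by (unfold b; nra).
assert (hek : 0 <= eps * Rabs k) by (pose proof (Rabs_pos k); nra).
assert (Hab : Rabs (a - b) <= S * k ^ 2 * (5 * (eps * Rabs k))).
{ replace (a - b) with (S * k ^ 2 * ((k * eps) * (4 + k * eps))) by (unfold a, b; ring).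
  rewrite Rabs_mult, (Rabs_pos_eq (S * k ^ 2)) by lra.
  rewrite Rabs_mult, (Rabs_pos_eq (4 + k * eps)) by lra.
  rewrite Rabs_mult, (Rabs_pos_eq eps) by lra.
  apply Rmult_le_compat_l; [lra|]. nra. }
assert (Hm : exp (- Rmin a b) <= exp (- (S * k ^ 2))).
{ apply exp_le_compat, Ropp_le_contravar, Rmin_glb; lra. }
assert (Hd : Rabs (bracket eps S k) <= 5 * (eps * Rabs k)).
{ rewrite hbr. eapply Rle_trans; [apply Rabs_exp_opp_sub; lra|].
  pose proof (mul_exp_opp_le_1 (S * k ^ 2)). pose proof (exp_pos (- Rmin a b)).
  pose proof (Rabs_pos (a - b)). pose proof (exp_pos (- (S * k ^ 2))).
  apply Rle_trans with (exp (- (S * k ^ 2)) * (S * k ^ 2 * (5 * (eps * Rabs k)))).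
  - apply Rmult_le_compat; lra.
  - nra. }
rewrite <- (pow2_abs (bracket eps S k)), <- (pow2_abs k).
pose proof (Rabs_pos (bracket eps S k)). nra.
Qed.

Definition tail_density (eps k : R) : R :=
  4 * eps ^ 2 * sqrt eps * k / ((1 + (eps * k) ^ 2) * sqrt (sqrt (1 + (eps * k) ^ 2))).

Definition tail_primitive (eps k : R) : R := - 8 * sqrt eps / sqrt (sqrt (1 + (eps * k) ^ 2)).

Lemma is_derive_tail_primitive (eps k : R) :
  is_derive (tail_primitive eps) k (tail_density eps k).
Proof.
unfold tail_primitive, tail_density.
assert (Hw : 0 < 1 + (eps * k) ^ 2) by nra.
assert (Hs1 : 0 < sqrt (1 + (eps * k) ^ 2)) by (apply sqrt_lt_R0; lra).
assert (Hs2 : 0 < sqrt (sqrt (1 + (eps * k) ^ 2))) by (apply sqrt_lt_R0; lra).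
auto_derive;
  replace (1 + eps * k * (eps * k * 1)) with (1 + (eps * k) ^ 2) by ring.
- repeat split; lra.
- set (w := 1 + (eps * k) ^ 2) in *. set (s1 := sqrt w) in *. set (s2 := sqrt s1) in *.
  assert (E2 : s2 * s2 = s1) by (apply sqrt_sqrt; lra).
  assert (E1 : s1 * s1 = w) by (apply sqrt_sqrt; lra).
  rewrite E2, <- E1. field. lra.
Qed.

Lemma continuous_tail_density (eps k : R) : continuous (tail_density eps) k.
Proof.
apply (ex_derive_continuous (tail_density eps)). unfold tail_density.
assert (Hw : 0 < 1 + (eps * k) ^ 2) by nra.
assert (Hs1 : 0 < sqrt (1 + (eps * k) ^ 2)) by (apply sqrt_lt_R0; lra).
assert (Hs2 : 0 < sqrt (sqrt (1 + (eps * k) ^ 2))) by (apply sqrt_lt_R0; lra).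
auto_derive.
replace (1 + eps * k * (eps * k * 1)) with (1 + (eps * k) ^ 2) by ring.
repeat split; try lra. apply Rgt_not_eq, Rmult_lt_0_compat; lra.
Qed.

Lemma tail_primitive_bounds (eps k : R) : - 8 * sqrt eps <= tail_primitive eps k <= 0.
Proof.
unfold tail_primitive.
assert (Hs2 : 1 <= sqrt (sqrt (1 + (eps * k) ^ 2))).
{ rewrite <- sqrt_1 at 1. apply sqrt_le_1_alt. rewrite <- sqrt_1 at 1.
  apply sqrt_le_1_alt. nra. }
pose proof (sqrt_pos eps). set (s := sqrt (sqrt (1 + (eps * k) ^ 2))) in *.
assert (/ s <= / 1) by (apply Rinv_le_contravar; lra). rewrite Rinv_1 in *.
assert (0 < / s) by (apply Rinv_0_lt_compat; lra).
unfold Rdiv. split; nra.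
Qed.

Lemma tail_density_sign (eps k : R) :
  (0 <= k -> 0 <= tail_density eps k) /\ (k <= 0 -> tail_density eps k <= 0).
Proof.
unfold tail_density.
assert (Hs2 : 0 < sqrt (sqrt (1 + (eps * k) ^ 2))) by (apply sqrt_lt_R0, sqrt_lt_R0; nra).
assert (hd : 0 < / ((1 + (eps * k) ^ 2) * sqrt (sqrt (1 + (eps * k) ^ 2))))
  by (apply Rinv_0_lt_compat, Rmult_lt_0_compat; nra).
assert (0 <= 4 * eps ^ 2 * sqrt eps) by (pose proof (sqrt_pos eps); pose proof (pow2_ge_0 eps); nra).
unfold Rdiv. set (c := 4 * eps ^ 2 * sqrt eps) in *. set (d := / _) in *.
split; intros hk.
- apply Rmult_le_pos; [apply Rmult_le_pos|]; lra.
- assert (0 <= c * (- k) * d) by (apply Rmult_le_pos; [apply Rmult_le_pos|]; lra). lra.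
Qed.

(* On [a, b] the integral of |h| is the total variation of its primitive H, which is
   monotone on each side of 0 since h changes sign only there. *)
Lemma is_RInt_abs_le_osc (h H : R -> R) (m M a b : R) :
  (forall x, is_derive H x (h x)) -> (forall x, continuous h x) ->
  (forall x, 0 <= x -> 0 <= h x) -> (forall x, x <= 0 -> h x <= 0) ->
  (forall x, m <= H x <= M) -> a <= b ->
  exists I, is_RInt (fun x => Rabs (h x)) a b I /\ I <= 2 * (M - m).
Proof.
intros hH hc hpos hneg hmM hab.
assert (Hint : forall c d, is_RInt h c d (H d - H c)).
{ intros c d. apply (is_RInt_derive H h); intros x _; [apply hH | apply hc]. }
assert (Hpos : forall c d, 0 <= c <= d -> is_RInt (fun x => Rabs (h x)) c d (H d - H c)).
{ intros c d hcd. apply is_RInt_ext with h; [|apply Hint].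
  intros x hx. rewrite Rmin_left in hx by lra. rewrite Rabs_pos_eq; [reflexivity|].
  apply hpos; lra. }
assert (Hneg : forall c d, c <= d <= 0 -> is_RInt (fun x => Rabs (h x)) c d (H c - H d)).
{ intros c d hcd. apply is_RInt_ext with (fun x => opp (h x)).
  - intros x hx. rewrite Rmax_right in hx by lra. rewrite Rabs_left1; [reflexivity|].
    apply hneg; lra.
  - replace (H c - H d) with (opp (H d - H c)) by (unfold opp; simpl; ring).
    exact (@is_RInt_opp R_NormedModule h c d _ (Hint c d)). }
pose proof (hmM a). pose proof (hmM b). pose proof (hmM 0).
destruct (Rle_or_lt 0 a) as [ha|ha].
{ exists (H b - H a). split; [apply Hpos|]; lra. }
destruct (Rle_or_lt b 0) as [hb|hb].
{ exists (H a - H b). split; [apply Hneg|]; lra. }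
exists (plus (H a - H 0) (H b - H 0)). split.
- apply (@is_RInt_Chasles R_NormedModule) with 0; [apply Hneg | apply Hpos]; lra.
- unfold plus; simpl. lra.
Qed.

Lemma is_RInt_lorentzian (A eps a b : R) : 0 < eps ->
  is_RInt (fun k => A / (1 + (eps * k) ^ 2)) a b (A / eps * (atan (eps * b) - atan (eps * a))).
Proof.
intros he.
replace (A / eps * (atan (eps * b) - atan (eps * a)))
  with (minus (A / eps * atan (eps * b)) (A / eps * atan (eps * a)))
  by (unfold minus, plus, opp; simpl; ring).
apply (is_RInt_derive (fun k => A / eps * atan (eps * k))); intros x _.
- auto_derive; [easy|]. field. split; nra.
- apply (ex_derive_continuous (fun k => A / (1 + (eps * k) ^ 2))). auto_derive. nra.
Qed.

Definition majorant (eps k : R) : R :=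
  6 * eps * sqrt eps / (1 + (eps * k) ^ 2) + Rabs (tail_density eps k).

Lemma is_RInt_majorant_le (eps a b : R) : 0 < eps -> a <= b ->
  exists I, is_RInt (majorant eps) a b I /\ I <= 40 * sqrt eps.
Proof.
intros he hab.
destruct (is_RInt_abs_le_osc (tail_density eps) (tail_primitive eps) (- 8 * sqrt eps) 0 a b)
  as [I [HI BI]]; auto.
- apply is_derive_tail_primitive.
- apply continuous_tail_density.
- intros x; apply tail_density_sign.
- intros x; apply tail_density_sign.
- intros x; apply tail_primitive_bounds.
- pose proof (is_RInt_lorentzian (6 * eps * sqrt eps) eps a b he) as HL.
  exists (plus (6 * eps * sqrt eps / eps * (atan (eps * b) - atan (eps * a))) I). split.
  + exact (@is_RInt_plus R_NormedModule _ _ a b _ _ HL HI).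
  + unfold plus; simpl.
    replace (6 * eps * sqrt eps / eps) with (6 * sqrt eps) by (field; lra).
    pose proof (atan_bound (eps * a)). pose proof (atan_bound (eps * b)).
    pose proof PI_4. pose proof (sqrt_pos eps).
    assert (atan (eps * b) - atan (eps * a) <= 4) by lra.
    nra.
Qed.

Lemma Rabs_tail_density (eps k : R) : Rabs (tail_density eps k) = tail_density eps (Rabs k).
Proof.
destruct (Rle_or_lt 0 k) as [hk|hk].
- rewrite (Rabs_pos_eq k) by lra. apply Rabs_pos_eq, tail_density_sign; lra.
- rewrite (Rabs_left k) by lra. rewrite Rabs_left1 by (apply tail_density_sign; lra).
  unfold tail_density.
  replace ((eps * - k) ^ 2) with ((eps * k) ^ 2) by ring. unfold Rdiv. ring.
Qed.

Lemma inv_sq_le_lorentzian (eps k : R) : 0 < eps -> 1 <= eps * Rabs k ->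
  2 / k ^ 2 <= 4 * eps ^ 2 / (1 + (eps * k) ^ 2).
Proof.
intros he hk.
assert (hk2 : 1 <= (eps * k) ^ 2).
{ rewrite Rpow_mult_distr, <- (pow2_abs k), <- Rpow_mult_distr. nra. }
assert (0 < k ^ 2) by (rewrite Rpow_mult_distr in hk2; nra).
unfold Rdiv. apply Rle_trans with (4 * eps ^ 2 * / (2 * (eps * k) ^ 2)).
- right. field. split; nra.
- apply Rmult_le_compat_l; [nra|]. apply Rinv_le_contravar; nra.
Qed.

(* With r = sqrt x and s = sqrt eps (so s r >= 1) the claim reads
   r^-3 <= 4 s^5 r^2 / ((1 + s^4 r^4) (1 + s^4 r^4)^(1/4)), and 1 + s^4 r^4 <= 2 (s r)^4
   with 2 <= 1.2^4. *)
Lemma sqrt_div_sq_le_tail_density (eps x : R) : 0 < eps -> 0 <= x -> 1 <= eps * x ->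
  sqrt x / x ^ 2 <= tail_density eps x.
Proof.
intros he hx hk. unfold tail_density.
set (r := sqrt x). set (s := sqrt eps).
assert (hr : r * r = x) by (apply sqrt_sqrt; lra).
assert (hs : s * s = eps) by (apply sqrt_sqrt; lra).
assert (r0 : 0 <= r) by apply sqrt_pos. assert (s0 : 0 <= s) by apply sqrt_pos.
assert (hsr : 1 <= (s * r) ^ 2) by (replace ((s * r) ^ 2) with (eps * x) by (rewrite <- hr, <- hs; ring); lra).
assert (hsr0 : 1 <= s * r) by (assert (0 <= s * r) by (apply Rmult_le_pos; auto); nra).
set (w := 1 + (eps * x) ^ 2).
assert (hw : w = 1 + (s * r) ^ 4) by (unfold w; rewrite <- hs, <- hr; ring).
set (ss := sqrt (sqrt w)).
assert (w0 : 0 < w) by nra.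
assert (ss0 : 0 < ss) by (apply sqrt_lt_R0, sqrt_lt_R0; lra).
assert (hss : ss ^ 4 = w).
{ unfold ss. replace (sqrt (sqrt w) ^ 4)
    with ((sqrt (sqrt w) * sqrt (sqrt w)) * (sqrt (sqrt w) * sqrt (sqrt w))) by ring.
  rewrite sqrt_sqrt by apply sqrt_pos. apply sqrt_sqrt; lra. }
assert (hb : ss <= 1.2 * (s * r)).
{ destruct (Rle_or_lt ss (1.2 * (s * r))) as [h|h]; auto. exfalso.
  assert (h2 : (1.2 * (s * r)) ^ 2 < ss ^ 2) by nra.
  assert ((1.2 * (s * r)) ^ 4 < ss ^ 4)
    by (replace ((1.2 * (s * r)) ^ 4) with (((1.2 * (s * r)) ^ 2) ^ 2) by ring;
        replace (ss ^ 4) with ((ss ^ 2) ^ 2) by ring; nra).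
  rewrite hss, hw in H. nra. }
replace (eps ^ 2) with (s ^ 4) by (rewrite <- hs; ring).
rewrite <- hr. replace ((r * r) ^ 2) with (r ^ 4) by ring. fold w ss.
assert (0 < r) by nra.
unfold Rdiv. apply Rmult_le_reg_r with (r ^ 4 * (w * ss)).
{ apply Rmult_lt_0_compat; [nra | apply Rmult_lt_0_compat; lra]. }
replace (r * / r ^ 4 * (r ^ 4 * (w * ss))) with (r * (w * ss)) by (field; lra).
replace (4 * s ^ 4 * s * (r * r) * / (w * ss) * (r ^ 4 * (w * ss)))
  with (4 * s ^ 5 * r ^ 6) by (field; lra).
rewrite hw.
assert (1 + (s * r) ^ 4 <= 2 * (s ^ 4 * r ^ 4)) by nra.
assert (r * ((1 + (s * r) ^ 4) * ss) <= r * ((2 * (s ^ 4 * r ^ 4)) * (1.2 * (s * r)))).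
{ apply Rmult_le_compat_l; auto. apply Rmult_le_compat; nra. }
nra.
Qed.

Lemma majorant_ge_0 (eps k : R) : 0 < eps -> 0 <= majorant eps k.
Proof.
intros he. unfold majorant. apply Rplus_le_le_0_compat; [|apply Rabs_pos].
unfold Rdiv. apply Rmult_le_pos; [|left; apply Rinv_0_lt_compat; nra].
pose proof (sqrt_pos eps). nra.
Qed.

Lemma majorant_near (eps k : R) : 0 < eps -> eps * Rabs k < 1 ->
  3 * eps * sqrt eps <= majorant eps k.
Proof.
intros he hk. unfold majorant. pose proof (sqrt_pos eps). pose proof (Rabs_pos (tail_density eps k)).
assert (hw : 1 + (eps * k) ^ 2 <= 2).
{ rewrite Rpow_mult_distr, <- (pow2_abs k), <- Rpow_mult_distr.
  assert (0 <= eps * Rabs k) by (apply Rmult_le_pos; [lra | apply Rabs_pos]). nra. }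
assert (/ 2 <= / (1 + (eps * k) ^ 2)) by (apply Rinv_le_contravar; nra).
assert (6 * eps * sqrt eps * / 2 <= 6 * eps * sqrt eps * / (1 + (eps * k) ^ 2))
  by (apply Rmult_le_compat_l; nra).
unfold Rdiv. lra.
Qed.

Lemma majorant_far (eps k : R) : 0 < eps <= 1 -> 1 <= eps * Rabs k ->
  (2 + sqrt (Rabs k)) / k ^ 2 <= majorant eps k.
Proof.
intros he hk. unfold majorant. rewrite Rabs_tail_density.
pose proof (inv_sq_le_lorentzian eps k (proj1 he) hk).
pose proof (sqrt_div_sq_le_tail_density eps (Rabs k) (proj1 he) (Rabs_pos k) hk).
rewrite pow2_abs in *.
assert (eps ^ 2 <= eps * sqrt eps).
{ pose proof (sqrt_sqrt eps (Rlt_le _ _ (proj1 he))). pose proof (sqrt_pos eps).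
  assert (sqrt eps <= 1) by (rewrite <- sqrt_1; apply sqrt_le_1_alt; lra). nra. }
assert (0 < / (1 + (eps * k) ^ 2)) by (apply Rinv_0_lt_compat; nra).
unfold Rdiv in *. nra.
Qed.

Lemma bracket_weight_near (q Cq eps S k : R) : 0 <= q -> q * k ^ 2 <= Cq ->
  0 <= S -> 0 < eps <= 1 -> eps * Rabs k < 1 ->
  q * bracket eps S k ^ 2 * (2 + sqrt (Rabs k)) <= 75 * Cq * (eps * sqrt eps).
Proof.
intros hq hqk hS he hk.
pose proof (bracket_sq_small eps S k hS (proj1 he) hk).
set (r := sqrt (Rabs k)). set (s := sqrt eps).
assert (hr : r * r = Rabs k) by (apply sqrt_sqrt, Rabs_pos).
assert (hs : s * s = eps) by (apply sqrt_sqrt; lra).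
assert (r0 : 0 <= r) by apply sqrt_pos. assert (s0 : 0 <= s) by apply sqrt_pos.
assert (hs1 : s <= 1) by nra.
assert (hsr : s * r <= 1) by (assert (0 <= s * r) by (apply Rmult_le_pos; auto); nra).
assert (hqb : q * bracket eps S k ^ 2 <= 25 * eps ^ 2 * Cq).
{ apply Rle_trans with (q * (25 * (eps ^ 2 * k ^ 2))); [apply Rmult_le_compat_l; auto|].
  replace (q * (25 * (eps ^ 2 * k ^ 2))) with (25 * eps ^ 2 * (q * k ^ 2)) by ring.
  apply Rmult_le_compat_l; [nra | auto]. }
assert (heps : eps ^ 2 * (2 + r) <= 3 * (eps * s)).
{ replace (eps ^ 2 * (2 + r)) with (eps * s * (2 * s + s * r)) by (rewrite <- hs; ring).
  assert (0 <= eps * s) by nra. nra. }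
assert (0 <= q * bracket eps S k ^ 2) by (pose proof (pow2_ge_0 (bracket eps S k)); nra).
assert (0 <= Cq) by (pose proof (pow2_ge_0 k); nra).
apply Rle_trans with (25 * eps ^ 2 * Cq * (2 + r)); [apply Rmult_le_compat_r; lra|]. nra.
Qed.

Lemma bracket_weight_far (q Cq eps S k : R) : 0 <= q -> q * k ^ 2 <= Cq ->
  0 <= S -> 1 <= eps * Rabs k ->
  q * bracket eps S k ^ 2 * (2 + sqrt (Rabs k)) <= Cq * ((2 + sqrt (Rabs k)) / k ^ 2).
Proof.
intros hq hqk hS hk.
pose proof (bracket_sq_le_1 eps S k hS). pose proof (pow2_ge_0 (bracket eps S k)).
assert (hk0 : k <> 0) by (intros ->; rewrite Rabs_R0, Rmult_0_r in hk; lra).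
assert (hk2 : 0 < k ^ 2) by (apply pow2_gt_0; auto).
assert (hqC : q <= Cq / k ^ 2).
{ unfold Rdiv. apply Rmult_le_reg_r with (k ^ 2); auto.
  rewrite Rmult_assoc, Rinv_l by lra. lra. }
pose proof (sqrt_pos (Rabs k)).
replace (Cq * ((2 + sqrt (Rabs k)) / k ^ 2)) with (Cq / k ^ 2 * (2 + sqrt (Rabs k)))
  by (unfold Rdiv; ring).
apply Rmult_le_compat_r; [lra|]. nra.
Qed.

Lemma bracket_weight_le_majorant (q Cq eps S k : R) : 0 <= q -> q * k ^ 2 <= Cq ->
  0 <= S -> 0 < eps <= 1 ->
  q * bracket eps S k ^ 2 * (2 + sqrt (Rabs k)) <= 25 * Cq * majorant eps k.
Proof.
intros hq hqk hS he.
assert (0 <= Cq) by (pose proof (pow2_ge_0 k); nra).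
destruct (Rlt_or_le (eps * Rabs k) 1) as [hk|hk].
- pose proof (bracket_weight_near q Cq eps S k hq hqk hS he hk).
  pose proof (majorant_near eps k (proj1 he) hk). nra.
- pose proof (bracket_weight_far q Cq eps S k hq hqk hS hk).
  pose proof (majorant_far eps k he hk). pose proof (majorant_ge_0 eps k (proj1 he)). nra.
Qed.

(* A Riemann integrable function is approximated from above by the step functions
   [phi_n + psi_n] that witness its integral. *)
Lemma RiemannInt_upper_StepFun (f : R -> R) (a b M : R) (pr : Riemann_integrable f a b) :
  a <= b -> RiemannInt pr <= M -> forall delta, 0 < delta ->
  exists phi : StepFun a b,
    (forall x, a <= x <= b -> f x <= phi x) /\ RiemannInt_SF phi <= M + delta.
Proof.
intros hab hM delta hd.
unfold RiemannInt in hM.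
destruct (RiemannInt_exists pr RinvN RinvN_cv) as [l Hl].
assert (hd2 : 0 < delta / 2) by lra.
destruct (Hl _ hd2) as [N1 HN1].
assert (HR := RinvN_cv). unfold Un_cv in HR. destruct (HR (delta / 2) hd2) as [N2 HN2].
set (N := max N1 N2).
destruct (phi_sequence_prop RinvN pr N) as [psi [Hpsi Ipsi]].
set (phi := phi_sequence RinvN pr N) in *.
exists (mkStepFun (StepFun_P28 1 phi psi)).
split.
- intros x hx. simpl. rewrite Rmin_left, Rmax_right in Hpsi by lra.
  specialize (Hpsi x hx). pose proof (Rle_abs (f x - phi x)). lra.
- rewrite StepFun_P30.
  specialize (HN1 N ltac:(unfold N; lia)). specialize (HN2 N ltac:(unfold N; lia)).
  unfold R_dist in *. rewrite Rminus_0_r, Rabs_pos_eq in HN2 by (left; apply cond_pos).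
  pose proof (Rle_abs (RiemannInt_SF psi)).
  pose proof (Rle_abs (RiemannInt_SF phi - l)). fold phi in HN1. lra.
Qed.

Lemma integral_R_le_of_majorant (g h : R -> R) (M : R) :
  (forall x, g x <= h x) ->
  (forall a b, a <= b -> exists I, is_RInt h a b I /\ I <= M) ->
  integral_R_le g M.
Proof.
intros hgh hint a b hab delta hd.
destruct (hint a b hab) as [I [HI HIM]].
assert (pr : Riemann_integrable h a b) by (apply ex_RInt_Reals_0; exists I; exact HI).
assert (HR : RiemannInt pr <= M) by (rewrite <- RInt_Reals, (is_RInt_unique _ _ _ _ HI); lra).
destruct (RiemannInt_upper_StepFun h a b M pr hab HR delta hd) as [phi [Hphi Hint]].
exists phi. split; [|exact Hint].
intros x hx. eapply Rle_trans; [apply hgh | apply Hphi, hx].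
Qed.

Lemma integrand_le_majorant (nu T gamma Cq eps S k qk : R) :
  Rabs nu <= 1 -> 0 <= gamma < / 4 -> 0 <= qk -> qk * k ^ 2 <= Cq ->
  0 < eps <= 1 -> 0 <= S <= T ->
  qk * f_fn nu eps S k ^ 2 * (rpow (Rabs k) (2 * gamma) + 1)
  <= 25 * exp (2 * T) * Cq * majorant eps k.
Proof.
intros hnu hg hq hqk he hS.
pose proof (f_fn_sq_le nu eps S T k hnu hS).
pose proof (rpow_le_1_add_sqrt (Rabs k) (2 * gamma) (Rabs_pos k) ltac:(lra)).
pose proof (rpow_ge_0 (Rabs k) (2 * gamma)).
pose proof (bracket_weight_le_majorant qk Cq eps S k hq hqk (proj1 hS) he).
pose proof (exp_pos (2 * T)). pose proof (pow2_ge_0 (f_fn nu eps S k)).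
pose proof (pow2_ge_0 (bracket eps S k)).
apply Rle_trans with (qk * (exp (2 * T) * bracket eps S k ^ 2) * (2 + sqrt (Rabs k))).
- apply Rmult_le_compat; [nra | lra | apply Rmult_le_compat_l; lra | lra].
- replace (qk * (exp (2 * T) * bracket eps S k ^ 2) * (2 + sqrt (Rabs k)))
    with (exp (2 * T) * (qk * bracket eps S k ^ 2 * (2 + sqrt (Rabs k)))) by ring.
  replace (25 * exp (2 * T) * Cq * majorant eps k)
    with (exp (2 * T) * (25 * Cq * majorant eps k)) by ring.
  apply Rmult_le_compat_l; lra.
Qed.

Theorem mainTheorem15 (nu T gamma Cq : R) (q : R -> R)
  (hnu : Rabs nu <= 1) (hT : 0 < T) (hgamma : 0 <= gamma < / 4)
  (hq_nonneg : forall k, 0 <= q k)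
  (hq_bound : forall k, q k <= Cq /\ q k * k ^ 2 <= Cq) :
  exists C : R, 0 < C /\
    forall eps : R, 0 < eps <= 1 ->
    forall S : R, 0 <= S <= T ->
      integral_R_le
        (fun k => q k * (f_fn nu eps S k) ^ 2 * (rpow (Rabs k) (2 * gamma) + 1))
        (C * (eps ^ 2 + sqrt eps)).
Proof.
assert (hCq : 0 <= Cq) by (pose proof (hq_nonneg 0); pose proof (hq_bound 0); lra).
pose proof (exp_pos (2 * T)) as hE.
exists (1000 * exp (2 * T) * (Cq + 1)). split; [nra|].
intros eps heps S hS.
apply integral_R_le_of_majorant
  with (h := fun k => 25 * exp (2 * T) * Cq * majorant eps k).
- intros k. apply integrand_le_majorant; auto. apply hq_bound.
- intros a b hab.
  destruct (is_RInt_majorant_le eps a b (proj1 heps) hab) as [I [HI HIle]].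
  exists (scal (25 * exp (2 * T) * Cq) I). split; [exact (@is_RInt_scal R_NormedModule (majorant eps) a b _ _ HI)|].
  unfold scal; simpl; unfold mult; simpl.
  assert (25 * exp (2 * T) * Cq * I <= 1000 * exp (2 * T) * Cq * sqrt eps)
    by (replace (1000 * exp (2 * T) * Cq * sqrt eps)
          with (25 * exp (2 * T) * Cq * (40 * sqrt eps)) by ring;
        apply Rmult_le_compat_l; nra).
  assert (0 <= 1000 * exp (2 * T) * ((Cq + 1) * eps ^ 2 + sqrt eps))
    by (pose proof (pow2_ge_0 eps); pose proof (sqrt_pos eps); apply Rmult_le_pos; nra).
  nra.
Qed.
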